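(* Let $F,G$ be absolutely continuous distribution functions with densities $f,g$. Let $X_1,\ldots,X_{n_1}$ be independent random variables with $P(X_i\leq x)=[F(x)]^{\alpha_i}$ for $i=1,\ldots,p_1$ and $P(X_i\leq x)=[G(x)]^{\alpha_i}$ for $i=p_1+1,\ldots,n_1$, and let $Y_1,\ldots,Y_{n_2}$ be independent random variables with $P(Y_i\leq x)=[F(x)]^{\beta_i}$ for $i=1,\ldots,p_2$ and $P(Y_i\leq x)=[G(x)]^{\beta_i}$ for $i=p_2+1,\ldots,n_2$, all $\alpha_i,\beta_i>0$. If $\sum_{i=1}^{p_1}\alpha_i>\sum_{i=1}^{p_2}\beta_i$ and $\sum_{i=p_1+1}^{n_1}\alpha_i>\sum_{i=p_2+1}^{n_2}\beta_i$, then $X_{n_1:n_1}\geq_{rh}Y_{n_2:n_2}$.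
   Context: $X_{n:n}=\max(X_1,\ldots,X_n)$. For $X\sim F_X$, $Y\sim F_Y$, $Y\leq_{rh}X$ (equivalently $X\geq_{rh}Y$; reversed hazard rate order) means $F_X(x)/F_Y(x)$ is increasing in $x$ over the union of the supports. *)

From HB Require Import structures.
From mathcomp Require Import all_boot all_order all_algebra.
From mathcomp Require Import all_classical all_reals all_analysis.
Set Implicit Arguments. Unset Strict Implicit. Unset Printing Implicit Defensive.
Import Order.TTheory GRing.Theory Num.Theory.
Import numFieldNormedType.Exports.
Local Open Scope classical_set_scope.
Local Open Scope ring_scope.

Definition abs_cont_df (R : realType) (F f : R -> R) : Prop :=
  [/\ (forall x, 0 <= f x),
      measurable_fun [set: R] f,
      (\int[lebesgue_measure]_x (f x)%:E = 1)%E
    & forall x, (F x)%:E = (\int[lebesgue_measure]_(t in `]-oo, x]) (f t)%:E)%E].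

Definition mutually_independent (R : realType) d (T : measurableType d)
  (P : probability T R) (n : nat) (X : 'I_n -> {RV P >-> R}) : Prop :=
  forall B : 'I_n -> set R, (forall i, measurable (B i)) ->
    P (\bigcap_(i in [set: 'I_n]) (X i @^-1` B i)) =
    (\prod_(i < n) P (X i @^-1` B i))%E.

(* X_{n:n} = max(X_1,...,X_n) (valued in \bar R; -oo for the empty family) *)
Definition maxRV (R : realType) (T : Type) (n : nat) (X : 'I_n -> T -> R)
  (w : T) : \bar R :=
  (\big[maxe/-oo]_(i < n) (X i w)%:E)%E.

Definition df_of (R : realType) d (T : measurableType d) (P : probability T R)
  (M : T -> \bar R) (x : R) : R :=
  fine (P [set w | (M w <= x%:E)%E]).

Definition ratio_ext (R : realType) (a b : R) : \bar R :=
  if b == 0 then +oo%E else (a / b)%:E.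

(* Y <=_rh X (FY, FX the distribution functions): FX/FY is increasing
   over the union of the supports, i.e. over {x | FX x > 0 or FY x > 0}. *)
Definition rh_le (R : realType) (FY FX : R -> R) : Prop :=
  forall x y, x <= y ->
    (0 < FX x \/ 0 < FY x) -> (0 < FX y \/ 0 < FY y) ->
    (ratio_ext (FX x) (FY x) <= ratio_ext (FX y) (FY y))%E.

From HB Require Import structures.
From mathcomp Require Import all_boot all_order all_algebra.
From mathcomp Require Import all_classical all_reals all_analysis.
Set Implicit Arguments. Unset Strict Implicit. Unset Printing Implicit Defensive.
Import Order.TTheory GRing.Theory Num.Theory.
Local Open Scope classical_set_scope.
Local Open Scope ring_scope.

(* By independence the distribution function of a maximum is the product of
   the marginal ones, so X_{n1:n1} and Y_{n2:n2} have distribution functions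
   F^a1 G^a2 and F^b1 G^b2, where a1, a2 (resp. b1, b2) are the sums of the
   exponents attached to F and to G.  Where both are positive the ratio is
   F^(a1-b1) G^(a2-b2), a product of nondecreasing functions since a1 > b1
   and a2 > b2; where F^a1 G^a2 vanishes the ratio is 0, and F^b1 G^b2
   vanishes only where F^a1 G^a2 does. *)

Section abs_cont_df.
Variables (R : realType) (F f : R -> R).
Hypothesis hF : abs_cont_df F f.

Lemma abs_cont_df_ge0 x : 0 <= F x.
Proof.
case: hF => f0 _ _ Fint; rewrite -lee_fin Fint.
by apply: integral_ge0 => t _; rewrite lee_fin.
Qed.

Lemma abs_cont_df_nondecreasing : {homo F : x y / x <= y}.
Proof.
case: hF => f0 mf _ Fint x y xy; rewrite -lee_fin !Fint.
apply: ge0_subset_integral => //.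
- by apply/measurable_realfun.measurable_EFinP; exact: measurable_funS mf.
- by move=> t _; rewrite lee_fin.
- by move=> t /=; rewrite !in_itv /= => tx; exact: le_trans tx xy.
Qed.

End abs_cont_df.

Lemma ge0_powRD (R : realType) (a r s : R) : 0 <= r -> 0 <= s ->
  a `^ (r + s) = a `^ r * a `^ s.
Proof.
move=> r0 s0; have [rs0|rs0] := eqVneq (r + s) 0; last first.
  by apply: powRD; rewrite (negbTE rs0).
have r00 : r = 0 by apply/le_anti; rewrite r0 andbT -rs0 lerDl.
by move: rs0; rewrite r00 add0r => ->; rewrite !powRr0 mulr1.
Qed.

Lemma prod_powR (R : realType) (I : Type) (r : seq I) (P : pred I)
    (a : R) (e : I -> R) : (forall i, 0 <= e i) ->
  \prod_(i <- r | P i) a `^ e i = a `^ (\sum_(i <- r | P i) e i).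
Proof.
move=> e0; elim: r => [|i r IH]; first by rewrite !big_nil powRr0.
by rewrite !big_cons; case: (P i); rewrite // IH ge0_powRD // sumr_ge0.
Qed.

Lemma prod_if_powR (R : realType) (n p : nat) (a b : R) (e : 'I_n -> R) :
    (forall i, 0 <= e i) ->
  \prod_(i < n) (if (i < p)%N then a else b) `^ e i =
  a `^ (\sum_(i < n | (i < p)%N) e i) * b `^ (\sum_(i < n | (p <= i)%N) e i).
Proof.
move=> e0; rewrite (bigID (fun i : 'I_n => (i < p)%N)) /=.
rewrite (eq_bigr (fun i => a `^ e i)); last by move=> i ->.
rewrite [X in _ * X](eq_bigr (fun i => b `^ e i)); last by move=> i /negbTE ->.
rewrite !prod_powR //; congr (_ * b `^ _).
by apply: eq_bigl => i; rewrite -leqNgt.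
Qed.

Lemma maxRV_le (R : realType) (T : Type) (n : nat) (Z : 'I_n -> T -> R)
    (x : R) :
  [set w | (maxRV Z w <= x%:E)%E] = \bigcap_(i in [set: 'I_n]) Z i @^-1` `]-oo, x].
Proof.
apply/seteqP; split=> w /=.
  by move=> /bigmax_leP[_ Zx] i _ /=; rewrite in_itv /= -lee_fin Zx.
move=> Zx; apply/bigmax_leP; split=> [|i _]; first exact: leNye.
by have := Zx i I; rewrite /= in_itv /= lee_fin.
Qed.

Lemma maxRV_indep_le (R : realType) d (T : measurableType d)
    (P : probability T R) (n : nat) (Z : 'I_n -> {RV P >-> R}) (x : R) :
  mutually_independent Z ->
  P [set w | (maxRV (fun i => Z i) w <= x%:E)%E] =
  (\prod_(i < n) P [set w | (Z i w <= x)%R])%E.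
Proof.
move=> Zind; rewrite maxRV_le Zind; last by move=> i; exact: measurable_itv.
by apply: eq_bigr => i _; congr (P _); apply/seteqP; split=> w; rewrite /= in_itv.
Qed.

Definition prh_df (R : realType) (F G : R -> R) (a b : R) (x : R) : R :=
  F x `^ a * G x `^ b.

Lemma df_of_maxRV_prh (R : realType) d (T : measurableType d)
    (P : probability T R) (n p : nat) (a : 'I_n -> R)
    (Z : 'I_n -> {RV P >-> R}) (F G : R -> R) :
  (forall i, 0 <= a i) -> mutually_independent Z ->
  (forall i x, P [set w | Z i w <= x] =
     ((if (i < p)%N then F x else G x) `^ a i)%:E) ->
  df_of P (maxRV (fun i => Z i)) =
  prh_df F G (\sum_(i < n | (i < p)%N) a i) (\sum_(i < n | (p <= i)%N) a i).
Proof.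
move=> a0 Zind Zdf; apply/funext => x; rewrite /df_of maxRV_indep_le //.
under eq_bigr do rewrite Zdf.
by rewrite prodEFin /= prod_if_powR.
Qed.

Lemma rh_le_of_ratio (R : realType) (FY FX : R -> R) :
  (forall x, 0 <= FX x) -> (forall x, 0 <= FY x) ->
  (forall x, 0 < FX x -> 0 < FY x) ->
  (forall x y, x <= y -> 0 < FX x -> 0 < FY y -> FX x / FY x <= FX y / FY y) ->
  rh_le FY FX.
Proof.
move=> FX0 FY0 FXY ratio_homo x y xy hx _; rewrite /ratio_ext.
have FYx_gt0 : 0 < FY x by case: hx => [/FXY|].
rewrite gt_eqF //; case: ifPn => [_|FYy_neq0]; first exact: leey.
have FYy_gt0 : 0 < FY y by rewrite lt_neqAle eq_sym FYy_neq0 FY0.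
rewrite lee_fin; have [FXx0|FXx_gt0] := eqVneq (FX x) 0.
  by rewrite FXx0 mul0r divr_ge0.
by apply: ratio_homo; rewrite // lt_neqAle eq_sym FXx_gt0 FX0.
Qed.

Section prh_df.
Variables (R : realType) (F G : R -> R).
Hypotheses (F0 : forall x, 0 <= F x) (G0 : forall x, 0 <= G x).
Hypotheses (Fmono : {homo F : x y / x <= y}) (Gmono : {homo G : x y / x <= y}).

Lemma prh_df_ge0 a b x : 0 <= prh_df F G a b x.
Proof. by rewrite mulr_ge0 ?powR_ge0. Qed.

Lemma prh_df_gt0 a b x : 0 < F x -> 0 < G x -> 0 < prh_df F G a b x.
Proof. by move=> Fx Gx; rewrite mulr_gt0 ?powR_gt0. Qed.

Lemma prh_df_gt0_support a b x : 0 < a -> 0 < b ->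
  0 < prh_df F G a b x -> 0 < F x /\ 0 < G x.
Proof.
move=> a0 b0; rewrite /prh_df mulr_ge0_gt0 ?powR_ge0 // => /andP[Fa Gb].
by split; [exact: gt0_powR a0 (F0 x) Fa | exact: gt0_powR b0 (G0 x) Gb].
Qed.

Lemma prh_df_ratio a1 a2 b1 b2 x : 0 < F x -> 0 < G x ->
  prh_df F G a1 a2 x / prh_df F G b1 b2 x = prh_df F G (a1 - b1) (a2 - b2) x.
Proof.
move=> Fx Gx; rewrite /prh_df !powRB ?(gt_eqF Fx) ?(gt_eqF Gx) ?implybT //.
by rewrite invfM mulrACA.
Qed.

Lemma prh_df_nondecreasing a b : 0 <= a -> 0 <= b ->
  {homo prh_df F G a b : x y / x <= y}.
Proof.
move=> a0 b0 x y xy; apply: ler_pM; rewrite ?powR_ge0 //.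
- by apply: ge0_ler_powR; rewrite ?nnegrE ?F0 ?Fmono.
- by apply: ge0_ler_powR; rewrite ?nnegrE ?G0 ?Gmono.
Qed.

Lemma rh_le_prh_df a1 a2 b1 b2 : 0 <= b1 -> 0 <= b2 -> b1 < a1 -> b2 < a2 ->
  rh_le (prh_df F G b1 b2) (prh_df F G a1 a2).
Proof.
move=> b10 b20 ab1 ab2.
have a10 := le_lt_trans b10 ab1; have a20 := le_lt_trans b20 ab2.
have support x := @prh_df_gt0_support _ _ x a10 a20.
apply: rh_le_of_ratio => [x|x|x /support[Fx Gx]|x y xy /support[Fx Gx] _].
- exact: prh_df_ge0.
- exact: prh_df_ge0.
- exact: prh_df_gt0.
have Fy := lt_le_trans Fx (Fmono xy); have Gy := lt_le_trans Gx (Gmono xy).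
rewrite !prh_df_ratio //; apply: prh_df_nondecreasing => //;
  by rewrite subr_ge0 ltW.
Qed.

End prh_df.

Theorem theorem4 (R : realType)
  (d1 : measure_display) (T1 : measurableType d1) (P1 : probability T1 R)
  (d2 : measure_display) (T2 : measurableType d2) (P2 : probability T2 R)
  (F G f g : R -> R) (hF : abs_cont_df F f) (hG : abs_cont_df G g)
  (n1 p1 n2 p2 : nat) (hp1 : (p1 <= n1)%N) (hp2 : (p2 <= n2)%N)
  (alpha : 'I_n1 -> R) (beta : 'I_n2 -> R)
  (halpha : forall i, 0 < alpha i) (hbeta : forall i, 0 < beta i)
  (X : 'I_n1 -> {RV P1 >-> R}) (Y : 'I_n2 -> {RV P2 >-> R})
  (hXind : mutually_independent X) (hYind : mutually_independent Y)
  (hXd : forall (i : 'I_n1) (x : R), P1 [set w | X i w <= x] =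
           ((if (i < p1)%N then F x else G x) `^ alpha i)%:E)
  (hYd : forall (i : 'I_n2) (x : R), P2 [set w | Y i w <= x] =
           ((if (i < p2)%N then F x else G x) `^ beta i)%:E)
  (hsum1 : \sum_(i < n1 | (i < p1)%N) alpha i > \sum_(i < n2 | (i < p2)%N) beta i)
  (hsum2 : \sum_(i < n1 | (p1 <= i)%N) alpha i > \sum_(i < n2 | (p2 <= i)%N) beta i) :
  rh_le (df_of P2 (maxRV (fun i => Y i))) (df_of P1 (maxRV (fun i => X i))).
Proof.
have alpha0 i : 0 <= alpha i by exact: ltW.
have beta0 i : 0 <= beta i by exact: ltW.
rewrite (df_of_maxRV_prh alpha0 hXind hXd) (df_of_maxRV_prh beta0 hYind hYd).
apply: rh_le_prh_df => //; try by apply: sumr_ge0.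
- exact: abs_cont_df_ge0 hF.
- exact: abs_cont_df_ge0 hG.
- exact: abs_cont_df_nondecreasing hF.
- exact: abs_cont_df_nondecreasing hG.
Qed.
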